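(* Let $\langle B,\wedge,{}'\rangle$ be an algebra with $\wedge$ binary and ${}'$ unary satisfying $x\wedge(y\wedge z)\approx y\wedge(z\wedge x)$ and $x\approx (x'\wedge y)'\wedge(x'\wedge y')'$. Then $x\wedge y=y\wedge x$ for all $x,y\in B$. *)

(* Write k_y for (x'y)'.  The axiom says x = k_y ∧ k_{y'} for every y, so each
   k_y is a left factor of x, and k_{y''} is moreover a right factor, since
   x = k_{y'} ∧ k_{y''}.  Cyclicity alone lets x ∧ (w ∧ (q ∧ z)) = x ∧ (w ∧ (z ∧ q))
   for a right factor q, and comparing the two factorisations
   x = k_y ∧ k_{y'} = k_{y'} ∧ k_{y''} gives x ∧ (k_y ∧ z) = x ∧ (k_{y''} ∧ z),
   which carries the swap over to every k_y.  As any element splits as a product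
   whose first factor is some k_y, this yields x ∧ (y ∧ z) = x ∧ (z ∧ y), hence
   associativity, and finally x ∧ y = (a ∧ b) ∧ y = a ∧ (b ∧ y) = y ∧ (a ∧ b) = y ∧ x. *)

From Corelib Require Import ssreflect.

Set Implicit Arguments.

Section CyclicMeet.

Variables (B : Type) (meet : B -> B -> B).
Local Infix "⊓" := meet (at level 40, left associativity).

Hypothesis meet_cycle : forall x y z : B, x ⊓ (y ⊓ z) = y ⊓ (z ⊓ x).

Lemma meet_lfactor_swap x k q u : x = k ⊓ q -> (u ⊓ k) ⊓ x = x ⊓ (k ⊓ u).
Proof.
move->; rewrite meet_cycle [q ⊓ _]meet_cycle.
by rewrite [RHS]meet_cycle.
Qed.

Lemma meet_rfactor_swap x p q z : x = p ⊓ q -> (q ⊓ z) ⊓ x = (z ⊓ q) ⊓ x.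
Proof.
move->; rewrite meet_cycle [RHS]meet_cycle.
by rewrite -[q ⊓ (z ⊓ q)]meet_cycle.
Qed.

Lemma meet_shift_factor x a b d z :
  x = a ⊓ b -> x = b ⊓ d -> (d ⊓ z) ⊓ x = x ⊓ (a ⊓ z).
Proof.
move=> xab xbd; rewrite {1}xab meet_cycle -[b ⊓ _]meet_cycle -xbd.
by rewrite -meet_cycle.
Qed.

Lemma meet_lfactor_assoc x k q z w :
  x = k ⊓ q -> x ⊓ ((k ⊓ z) ⊓ w) = x ⊓ (z ⊓ (k ⊓ w)).
Proof.
move=> xkq; rewrite -meet_cycle -(meet_lfactor_swap z xkq).
by rewrite -[z ⊓ (k ⊓ w)]meet_cycle -meet_cycle.
Qed.

Lemma meet_rfactor_inner_comm x p q w z :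
  x = p ⊓ q -> x ⊓ (w ⊓ (q ⊓ z)) = x ⊓ (w ⊓ (z ⊓ q)).
Proof.
move=> xpq; rewrite meet_cycle [RHS]meet_cycle.
by rewrite (meet_rfactor_swap z xpq).
Qed.

Lemma meet_inner_comm_transfer x k q k' q' :
  x = k ⊓ q -> x = k' ⊓ q' ->
  (forall z, x ⊓ (k ⊓ z) = x ⊓ (k' ⊓ z)) ->
  (forall w z, x ⊓ (w ⊓ (k' ⊓ z)) = x ⊓ (w ⊓ (z ⊓ k'))) ->
  forall w z, x ⊓ (w ⊓ (k ⊓ z)) = x ⊓ (w ⊓ (z ⊓ k)).
Proof.
move=> xk xk' kk' k'_comm w z.
have -> : x ⊓ (w ⊓ (k ⊓ z)) = x ⊓ (w ⊓ (k' ⊓ z)).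
  rewrite -(meet_lfactor_assoc w z xk) -(meet_lfactor_assoc w z xk').
  by rewrite -[LHS]meet_cycle -[RHS]meet_cycle kk'.
rewrite k'_comm meet_cycle [RHS]meet_cycle.
by rewrite (meet_lfactor_swap z xk') (meet_lfactor_swap z xk) kk'.
Qed.

Section Huntington.

Variable c : B -> B.
Hypothesis huntington : forall x y : B, x = c (c x ⊓ y) ⊓ c (c x ⊓ c y).

Lemma meet_compl_inner_comm x y w z :
  x ⊓ (w ⊓ (c (c x ⊓ y) ⊓ z)) = x ⊓ (w ⊓ (z ⊓ c (c x ⊓ y))).
Proof.
apply: (meet_inner_comm_transfer (huntington x y) (huntington x (c (c y)))).
- move=> t; rewrite -(meet_shift_factor t (huntington x y) (huntington x (c y))).
  rewrite (meet_rfactor_swap t (huntington x (c y))).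
  exact: meet_lfactor_swap (huntington x (c (c y))).
- move=> {}w {}z; exact: meet_rfactor_inner_comm (huntington x (c y)).
Qed.

Lemma meet_factor x y : y = c (c x ⊓ (x ⊓ c y)) ⊓ c (c y ⊓ c (c x ⊓ x)).
Proof. by rewrite {1}(huntington y (c x ⊓ x)) meet_cycle. Qed.

Lemma meet_inner_comm x y z : x ⊓ (y ⊓ z) = x ⊓ (z ⊓ y).
Proof.
rewrite (meet_factor x y) (meet_lfactor_assoc _ _ (huntington x (x ⊓ c y))).
by rewrite -[_ ⊓ (_ ⊓ z)]meet_cycle [RHS]meet_compl_inner_comm.
Qed.

Lemma meetA x y z : (x ⊓ y) ⊓ z = x ⊓ (y ⊓ z).
Proof.
rewrite meet_cycle (meet_factor y z).
set a := c (c y ⊓ _); set b := c (c z ⊓ _).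
rewrite (meet_lfactor_assoc _ _ (huntington y (y ⊓ c z))).
rewrite [RHS]meet_inner_comm -[RHS]meet_cycle [y ⊓ _]meet_cycle.
by rewrite -[LHS]meet_cycle [LHS]meet_inner_comm.
Qed.

Lemma meetC x y : x ⊓ y = y ⊓ x.
Proof. by rewrite {1}(huntington x x) meetA -meet_cycle -huntington. Qed.

End Huntington.

End CyclicMeet.

Theorem lemma4p20 (B : Type) (meet : B -> B -> B) (c : B -> B)
  (hcyc : forall x y z : B, meet x (meet y z) = meet y (meet z x))
  (hax : forall x y : B, x = meet (c (meet (c x) y)) (c (meet (c x) (c y)))) :
  forall x y : B, meet x y = meet y x.
Proof. exact: meetC _ hcyc _ hax. Qed.
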